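(* Under the assumptions of Theorem 4.1 (with $k\ge1$), define $$h^{(u)}(D_A)=\min\Big\{H(D_U)+\sum_{t=1}^k H(W_t),\ -\sum_{t=1}^k\log(1-P_{W_t})\Big\}$$ and, writing $\pi=\prod_{t=1}^k P_{W_t}$, $$h^{(l)}(D_A)=\max\Big\{-\sum_{t=1}^k\log P_{W_t},\ H(D_U)+\sum_{t=1}^kH(W_t)+\pi\log\pi+(1-\pi)\log(1-\pi)-(1-\pi)\min\{\log(2^k-1),H(D_U)\}\Big\}.$$ Then $h^{(l)}(D_A)\le H(D_A)\le h^{(u)}(D_A)$.
   Context: A result set $R$ is a finite set of possible matchings $m_j\subseteq C$ with $\mathbb{P}:R\to[0,1]$ summing to 1; the correct matching $M$ is distributed by $\mathbb{P}$. For distinct $c_1,\dots,c_k\in C$ and accuracies $P_{W_1},\dots,P_{W_k}\in[0.5,1]$, the answers $A_{c_t}\in\{Y,N\}$ are conditionally independent given $M$, with $\mathbb{P}(A_{c_t}=Y\mid M)=P_{W_t}$ if $c_t\in M$ and $1-P_{W_t}$ otherwise. $H(D_A)=-\sum_{a\in\{Y,N\}^k}\mathbb{P}(a)\log\mathbb{P}(a)$ is the joint entropy of the answer vector. $U=(\mathbf{1}[c_1\in M],\dots,\mathbf{1}[c_k\in M])\in\{T,F\}^k$ and $H(D_U)$ is its joint entropy, where $\mathbb{P}(U=u)=\sum_{m_j:\ (\mathbf{1}[c_t\in m_j])_t=u}\mathbb{P}(m_j)$. $H(W_t)=-P_{W_t}\log P_{W_t}-(1-P_{W_t})\log(1-P_{W_t})$.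 Logarithms base 2, $0\log0=0$, and $-\log 0=+\infty$ (so the second term of $h^{(u)}$ is $+\infty$ if some $P_{W_t}=1$). *)

From Stdlib Require Import Reals Lra Lia List.
Import ListNotations.
Open Scope R_scope.

Definition log2 (x : R) : R := ln x / ln 2.

Definition plogp (x : R) : R :=
  if Req_EM_T x 0 then 0 else x * log2 x.

Definition sumR (n : nat) (f : nat -> R) : R :=
  fold_right Rplus 0 (map f (seq 0 n)).
Definition prodR (n : nat) (f : nat -> R) : R :=
  fold_right Rmult 1 (map f (seq 0 n)).

(* all vectors in {T,F}^k = {Y,N}^k, encoded as lists of booleans of length k
   (true = T resp. Y, false = F resp. N) *)
Fixpoint all_vecs (k : nat) : list (list bool) :=
  match k with
  | O => [[]]
  | S k' => map (cons true) (all_vecs k') ++ map (cons false) (all_vecs k')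
  end.

(* A result set R = {m_0,...,m_{n-1}}, each matching m_j a subset of C given by
   its membership predicate m j : C -> bool, with probabilities p j.
   Queried correspondences c_0..c_{k-1}, accuracies pw 0 .. pw (k-1). *)

Definition indic {C : Type} (k : nat) (c : nat -> C) (mj : C -> bool) : list bool :=
  map (fun t => mj (c t)) (seq 0 k).

Definition probU {C : Type} (n : nat) (m : nat -> C -> bool) (p : nat -> R)
  (k : nat) (c : nat -> C) (u : list bool) : R :=
  sumR n (fun j => if list_eq_dec Bool.bool_dec (indic k c (m j)) u then p j else 0).

(* P(A = a) = sum_j P(m_j) prod_t P(A_{c_t} = a_t | M = m_j) *)
Definition probA {C : Type} (n : nat) (m : nat -> C -> bool) (p : nat -> R)
  (k : nat) (c : nat -> C) (pw : nat -> R) (a : list bool) : R :=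
  sumR n (fun j => p j * prodR k (fun t =>
    if Bool.eqb (nth t a false) (m j (c t)) then pw t else 1 - pw t)).

Definition entropy (k : nat) (P : list bool -> R) : R :=
  - fold_right Rplus 0 (map (fun v => plogp (P v)) (all_vecs k)).

Definition H_DA {C : Type} n m p k (c : nat -> C) pw : R := entropy k (probA n m p k c pw).
Definition H_DU {C : Type} n m p k (c : nat -> C) : R := entropy k (probU n m p k c).

Definition H_W (q : R) : R := - plogp q - plogp (1 - q).

(* does some accuracy equal 1 ?  (then -sum log(1-P_W) = +infinity) *)
Definition some_one (k : nat) (pw : nat -> R) : bool :=
  existsb (fun t => if Req_EM_T (pw t) 1 then true else false) (seq 0 k).

(* h^(u)(D_A) = min{ H(D_U) + sum H(W_t), -sum log(1 - P_W_t) }, where the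
   second term is +infinity (so the min is the first term) if some P_W_t = 1 *)
Definition h_upper {C : Type} n m p k (c : nat -> C) pw : R :=
  let first := H_DU n m p k c + sumR k (fun t => H_W (pw t)) in
  if some_one k pw then first
  else Rmin first (- sumR k (fun t => log2 (1 - pw t))).

Definition h_lower {C : Type} n m p k (c : nat -> C) pw : R :=
  let pi := prodR k pw in
  let HU := H_DU n m p k c in
  Rmax (- sumR k (fun t => log2 (pw t)))
       (HU + sumR k (fun t => H_W (pw t)) + plogp pi + plogp (1 - pi)
          - (1 - pi) * Rmin (log2 (2 ^ k - 1)) HU).

(* Let q be the law of the indicator vector U in {T,F}^k and let the answers
   be produced from U by the memoryless channel
     chan(a|u) = prod_t (pw t if a_t = u_t else 1 - pw t),
   so that the answer distribution is P(a) = sum_u q(u) chan(a|u).  We work in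
   nats throughout and divide by ln 2 only at the very end.

   With J(a,u) = q(u) chan(a|u) the joint law, H(A) = H(A,U) - H(U|A) and
   H(A,U) = H(U) + sum_t H(W_t).  Hence
   - H(U|A) >= 0 gives H(A) <= H(U) + sum_t H(W_t);
   - P(a) >= prod_t (1 - pw t) and P(a) <= prod_t pw t =: pi give the two
     "extreme" bounds -sum ln(1 - pw t) and -sum ln(pw t);
   - a Gibbs-type inequality H(U|A) <= -sum J ln c, valid for any kernel c
     with sub-unit row sums, yields two Fano inequalities
     H(U|A) <= h(pi) + (1 - pi) min{ln(2^k - 1), H(U)}, by choosing c = pi on
     the diagonal and either a uniform or a q-proportional value off it. *)

From Stdlib Require Import Reals Lra Lia List Setoid Morphisms.
Import ListNotations.
Open Scope R_scope.

Definition lsum {A : Type} (l : list A) (f : A -> R) : R := fold_right Rplus 0 (map f l).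
Definition lprod {A : Type} (l : list A) (f : A -> R) : R := fold_right Rmult 1 (map f l).

Section ListSums.
Context {A B : Type}.

Lemma lsum_cons (x : A) l f : lsum (x :: l) f = f x + lsum l f.
Proof. reflexivity. Qed.

Lemma lsum_app (l1 l2 : list A) f : lsum (l1 ++ l2) f = lsum l1 f + lsum l2 f.
Proof.
  induction l1 as [|x l1 IH]; unfold lsum in *; simpl; [ring|].
  rewrite IH; ring.
Qed.

Lemma lsum_map (g : B -> A) l f : lsum (map g l) f = lsum l (fun x => f (g x)).
Proof. unfold lsum. now rewrite map_map. Qed.

Lemma lsum_ext (l : list A) f g : (forall x, In x l -> f x = g x) -> lsum l f = lsum l g.
Proof. intro H. unfold lsum. f_equal. now apply map_ext_in. Qed.

Lemma lsum_le (l : list A) f g : (forall x, In x l -> f x <= g x) -> lsum l f <= lsum l g.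
Proof.
  induction l as [|x l IH]; intro H; unfold lsum in *; simpl; [lra|].
  apply Rplus_le_compat; [apply H; now left | apply IH; intros; apply H; now right].
Qed.

Lemma lsum_plus (l : list A) f g : lsum l (fun x => f x + g x) = lsum l f + lsum l g.
Proof. induction l; unfold lsum in *; simpl; [ring|]. rewrite IHl; ring. Qed.

Lemma lsum_minus (l : list A) f g : lsum l (fun x => f x - g x) = lsum l f - lsum l g.
Proof. induction l; unfold lsum in *; simpl; [ring|]. rewrite IHl; ring. Qed.

Lemma lsum_scal (l : list A) r f : lsum l (fun x => r * f x) = r * lsum l f.
Proof. induction l; unfold lsum in *; simpl; [ring|]. rewrite IHl; ring. Qed.

Lemma lsum_opp (l : list A) f : lsum l (fun x => - f x) = - lsum l f.
Proof. induction l; unfold lsum in *; simpl; [ring|]. rewrite IHl; ring. Qed.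

Lemma lsum_scalr (l : list A) r f : lsum l (fun x => f x * r) = lsum l f * r.
Proof. induction l; unfold lsum in *; simpl; [ring|]. rewrite IHl; ring. Qed.

Lemma lsum_const (l : list A) r : lsum l (fun _ => r) = INR (length l) * r.
Proof.
  induction l; unfold lsum in *; simpl length; [simpl; ring|].
  rewrite S_INR. simpl. rewrite IHl. ring.
Qed.

Lemma lsum_nonneg (l : list A) f : (forall x, In x l -> 0 <= f x) -> 0 <= lsum l f.
Proof.
  intro H. replace 0 with (lsum l (fun _ => 0)) by (rewrite lsum_const; ring).
  now apply lsum_le.
Qed.

Lemma lsum_ge_term (l : list A) f a :
  (forall x, In x l -> 0 <= f x) -> In a l -> f a <= lsum l f.
Proof.
  induction l as [|x l IH]; intros H Ha; [destruct Ha|]. rewrite lsum_cons.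
  assert (0 <= f x) by (apply H; now left).
  assert (0 <= lsum l f) by (apply lsum_nonneg; intros; apply H; now right).
  destruct Ha as [<-|Ha]; [lra|].
  assert (f a <= lsum l f) by (apply IH; auto; intros; apply H; now right).
  lra.
Qed.

Lemma lprod_ext (l : list A) f g : (forall x, In x l -> f x = g x) -> lprod l f = lprod l g.
Proof. intro H. unfold lprod. f_equal. now apply map_ext_in. Qed.

Lemma lprod_le (l : list A) f g :
  (forall x, In x l -> 0 <= f x <= g x) -> 0 <= lprod l f <= lprod l g.
Proof.
  induction l as [|x l IH]; intro H; unfold lprod in *; simpl; [lra|].
  assert (0 <= f x <= g x) by (apply H; now left).
  assert (0 <= fold_right Rmult 1 (map f l) <= fold_right Rmult 1 (map g l))
    by (apply IH; intros; apply H; now right).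
  split; [apply Rmult_le_pos | apply Rmult_le_compat]; lra.
Qed.

Lemma lprod_nonneg (l : list A) f : (forall x, In x l -> 0 <= f x) -> 0 <= lprod l f.
Proof. intro H. apply (lprod_le l f f). intros x Hx. specialize (H x Hx). lra. Qed.

Lemma lprod_pos (l : list A) f : (forall x, In x l -> 0 < f x) -> 0 < lprod l f.
Proof.
  induction l; intro H; unfold lprod in *; simpl; [lra|].
  apply Rmult_lt_0_compat; [apply H; now left | apply IHl; intros; apply H; now right].
Qed.

Lemma ln_lprod (l : list A) f :
  (forall x, In x l -> 0 < f x) -> ln (lprod l f) = lsum l (fun x => ln (f x)).
Proof.
  induction l as [|x l IH]; intro H; [apply ln_1|].
  assert (0 < lprod l f) by (apply lprod_pos; intros; apply H; now right).
  unfold lprod, lsum in *; simpl. rewrite ln_mult by (auto; apply H; now left).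
  rewrite IH by (intros; apply H; now right). reflexivity.
Qed.

End ListSums.

Lemma lsum_swap {A B : Type} (l1 : list A) (l2 : list B) f :
  lsum l1 (fun x => lsum l2 (fun y => f x y)) = lsum l2 (fun y => lsum l1 (fun x => f x y)).
Proof.
  induction l1 as [|x l1 IH].
  - change (0 = lsum l2 (fun _ => 0)). rewrite lsum_const. ring.
  - unfold lsum in *; simpl. rewrite IH. symmetry. apply (lsum_plus l2).
Qed.

#[export] Instance lsum_Proper {A} (l : list A) :
  Proper (pointwise_relation A eq ==> eq) (lsum l).
Proof. intros f g H. apply lsum_ext. intros; apply H. Qed.

Section Pick.
Context {A : Type} (dec : forall x y : A, {x = y} + {x <> y}).

Lemma lsum_pick (l : list A) a f : NoDup l -> In a l ->
  lsum l (fun u => if dec u a then f u else 0) = f a.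
Proof.
  induction l as [|x l IH]; intros Hn Ha; [destruct Ha|]. inversion Hn; subst.
  rewrite lsum_cons. destruct Ha as [<-|Ha].
  - destruct (dec x x) as [_|]; [|congruence].
    rewrite (lsum_ext l _ (fun _ => 0)), lsum_const; [ring|].
    intros y Hy. destruct (dec y x); subst; tauto.
  - destruct (dec x a); [subst; tauto|]. rewrite IH; auto; ring.
Qed.

Lemma lsum_pick_l (l : list A) a f : NoDup l -> In a l ->
  lsum l (fun u => if dec a u then f u else 0) = f a.
Proof.
  intros. rewrite <- (lsum_pick l a f) by auto. apply lsum_ext. intros x _.
  destruct (dec a x), (dec x a); subst; congruence.
Qed.

End Pick.

Lemma sumR_lsum n f : sumR n f = lsum (seq 0 n) f. Proof. reflexivity. Qed.

Lemma sumR_S k f : sumR (S k) f = f 0%nat + sumR k (fun t => f (S t)).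
Proof. unfold sumR. simpl. now rewrite <- seq_shift, map_map. Qed.

Lemma prodR_S k f : prodR (S k) f = f 0%nat * prodR k (fun t => f (S t)).
Proof. unfold prodR. simpl. now rewrite <- seq_shift, map_map. Qed.

Lemma ln_le_mono x y : 0 < x -> x <= y -> ln x <= ln y.
Proof. intros Hx Hxy. destruct (Req_dec x y) as [->|H]; [lra|]. left. apply ln_increasing; lra. Qed.

(* Gibbs' inequality in the form  J ln (Q / J) <= Q - J,  i.e. ln x <= x - 1. *)
Lemma gibbs J Q : 0 < J -> 0 < Q -> J * (ln Q - ln J) <= Q - J.
Proof.
  intros HJ HQ.
  assert (E : ln Q - ln J = ln (Q / J)).
  { unfold Rdiv. rewrite ln_mult, ln_Rinv by (try apply Rinv_0_lt_compat; lra). ring. }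
  assert (H := exp_ineq1_le (ln (Q / J))).
  rewrite exp_ln in H by (apply Rdiv_lt_0_compat; lra).
  rewrite E. replace (Q - J) with (J * (Q / J - 1)) by (field; lra).
  apply Rmult_le_compat_l; lra.
Qed.

Lemma xlnx_mult x y : 0 <= x -> 0 <= y -> x * y * ln (x * y) = x * ln x * y + x * (y * ln y).
Proof.
  intros Hx Hy. destruct (Req_dec x 0) as [->|Hx']; [ring|].
  destruct (Req_dec y 0) as [->|Hy']; [ring|]. rewrite ln_mult by lra. ring.
Qed.

Definition Ent {A : Type} (l : list A) (f : A -> R) : R := - lsum l (fun v => f v * ln (f v)).

Definition hb (x : R) : R := - (x * ln x) - (1 - x) * ln (1 - x).

Lemma Ent_ge_of_le {A : Type} (l : list A) f M :
  (forall x, 0 <= f x) -> lsum l f = 1 -> 0 < M -> (forall x, f x <= M) -> - ln M <= Ent l f.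
Proof.
  intros H0 H1 HM Hle. unfold Ent. apply Ropp_le_contravar.
  rewrite <- (Rmult_1_l (ln M)), <- H1, <- lsum_scalr.
  apply lsum_le. intros x _. destruct (Req_dec (f x) 0) as [E|E]; [rewrite E; lra|].
  apply Rmult_le_compat_l; [auto|]. apply ln_le_mono; [specialize (H0 x); lra | auto].
Qed.

Lemma Ent_le_of_ge {A : Type} (l : list A) f m :
  lsum l f = 1 -> 0 < m -> (forall x, m <= f x) -> Ent l f <= - ln m.
Proof.
  intros H1 Hm Hge. unfold Ent. apply Ropp_le_contravar.
  rewrite <- (Rmult_1_l (ln m)), <- H1, <- lsum_scalr.
  apply lsum_le. intros x _. apply Rmult_le_compat_l; [specialize (Hge x); lra|].
  now apply ln_le_mono.
Qed.

(** * Conditional entropy of a joint law *)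

Section ConditionalEntropy.
Context {A B : Type} (la : list A) (lu : list B) (J : A -> B -> R).
Hypothesis J_nonneg : forall a u, In u lu -> 0 <= J a u.

Definition cond_ent : R :=
  lsum la (fun a => lsum lu (fun u => J a u * (ln (lsum lu (J a)) - ln (J a u)))).

Lemma J_le_marginal a u : In u lu -> J a u <= lsum lu (J a).
Proof. intro Hu. apply (lsum_ge_term lu (J a)); auto. Qed.

Lemma cond_ent_split :
  cond_ent = - lsum la (fun a => lsum lu (fun u => J a u * ln (J a u)))
             - Ent la (fun a => lsum lu (J a)).
Proof.
  enough (cond_ent = lsum la (fun a => lsum lu (J a) * ln (lsum lu (J a)))
                     - lsum la (fun a => lsum lu (fun u => J a u * ln (J a u))))
    by (unfold Ent; lra).
  unfold cond_ent. rewrite <- lsum_minus. apply lsum_ext. intros a _.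
  rewrite <- lsum_scalr, <- lsum_minus. apply lsum_ext. intros u _. ring.
Qed.

Lemma cond_ent_nonneg : 0 <= cond_ent.
Proof.
  apply lsum_nonneg. intros a _. apply lsum_nonneg. intros u Hu.
  assert (H0 := J_nonneg a u Hu). assert (H1 := J_le_marginal a u Hu).
  destruct (Req_dec (J a u) 0) as [E|E]; [rewrite E; lra|].
  apply Rmult_le_pos; [auto|]. enough (ln (J a u) <= ln (lsum lu (J a))) by lra.
  apply ln_le_mono; lra.
Qed.

Lemma cond_ent_gibbs (c : A -> B -> R) :
  (forall a u, In u lu -> 0 <= c a u) ->
  (forall a, In a la -> lsum lu (c a) <= 1) ->
  (forall a u, In a la -> In u lu -> 0 < J a u -> 0 < c a u) ->
  cond_ent <= lsum la (fun a => lsum lu (fun u => J a u * - ln (c a u))).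
Proof.
  intros Hc0 Hc1 Hcpos. unfold cond_ent. apply lsum_le. intros a Ha.
  set (P := lsum lu (J a)).
  assert (HP : 0 <= P) by (apply lsum_nonneg; auto).
  assert (Hpt : forall u, In u lu ->
    J a u * (ln P - ln (J a u)) <= (P * c a u - J a u) + J a u * - ln (c a u)).
  { intros u Hu. assert (H0 := J_nonneg a u Hu). assert (H1 := J_le_marginal a u Hu).
    assert (H2 := Hc0 a u Hu). fold P in H1.
    destruct (Req_dec (J a u) 0) as [E|E].
    - rewrite E. assert (0 <= P * c a u) by (apply Rmult_le_pos; lra). lra.
    - assert (Hc := Hcpos a u Ha Hu ltac:(lra)).
      assert (G := gibbs (J a u) (P * c a u) ltac:(lra) ltac:(apply Rmult_lt_0_compat; lra)).
      rewrite ln_mult in G by lra. lra. }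
  assert (Hmass : lsum lu (fun u => P * c a u - J a u) <= 0).
  { rewrite lsum_minus, lsum_scal. fold P.
    assert (P * lsum lu (c a) <= P * 1) by (apply Rmult_le_compat_l; auto). lra. }
  eapply Rle_trans; [apply (lsum_le lu _ _ Hpt)|]. rewrite lsum_plus. lra.
Qed.

End ConditionalEntropy.

Lemma in_all_vecs k v : In v (all_vecs k) <-> length v = k.
Proof.
  revert v; induction k as [|k IH]; intro v; simpl.
  - split; [intros [<-|[]]; reflexivity | destruct v; [auto | discriminate]].
  - rewrite in_app_iff, !in_map_iff. split.
    + intros [[x [<- Hx]]|[x [<- Hx]]]; simpl; f_equal; now apply IH.
    + destruct v as [|b v]; simpl; [discriminate|]. intro H; injection H as H.
      destruct b; [left|right]; exists v; split; auto; now apply IH.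
Qed.

Lemma nodup_all_vecs k : NoDup (all_vecs k).
Proof.
  induction k as [|k IH]; simpl.
  - repeat constructor. simpl; auto.
  - apply NoDup_app.
    + apply NoDup_map_NoDup_ForallPairs; auto. intros x y _ _ H; now injection H.
    + apply NoDup_map_NoDup_ForallPairs; auto. intros x y _ _ H; now injection H.
    + intros a Ha Hb. apply in_map_iff in Ha, Hb.
      destruct Ha as [x [<- _]], Hb as [y [H _]]. discriminate.
Qed.

Lemma length_all_vecs k : length (all_vecs k) = (2 ^ k)%nat.
Proof. induction k; simpl; auto. rewrite length_app, !length_map, IHk. lia. Qed.

Lemma lsum_all_vecs_S k f : lsum (all_vecs (S k)) f =
  lsum (all_vecs k) (fun a => f (true :: a)) + lsum (all_vecs k) (fun a => f (false :: a)).
Proof. simpl. rewrite lsum_app, !lsum_map. reflexivity. Qed.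

Definition veq := list_eq_dec Bool.bool_dec.

(** * The answer channel *)

Definition chan (k : nat) (pw : nat -> R) (a u : list bool) : R :=
  prodR k (fun t => if Bool.eqb (nth t a false) (nth t u false) then pw t else 1 - pw t).

Lemma chan_S k pw b a u : chan (S k) pw (b :: a) u =
  (if Bool.eqb b (hd false u) then pw 0%nat else 1 - pw 0%nat)
  * chan k (fun t => pw (S t)) a (tl u).
Proof.
  unfold chan. rewrite prodR_S. f_equal.
  - destruct u; reflexivity.
  - apply lprod_ext. intros t _. simpl.
    replace (nth (S t) u false) with (nth t (tl u) false); [reflexivity|].
    destruct u; simpl; [destruct t|]; reflexivity.
Qed.

Lemma chan_sum1 k : forall pw u, lsum (all_vecs k) (fun a => chan k pw a u) = 1.
Proof.
  induction k as [|k IH]; intros pw u.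
  - unfold lsum, chan, prodR; simpl; ring.
  - rewrite lsum_all_vecs_S. setoid_rewrite chan_S. rewrite !lsum_scal, !IH.
    destruct (hd false u); simpl; ring.
Qed.

Lemma chan_nonneg k pw a u :
  (forall t, (t < k)%nat -> 0 <= pw t <= 1) -> 0 <= chan k pw a u.
Proof.
  intro H. apply lprod_nonneg. intros t Ht. apply in_seq in Ht.
  specialize (H t ltac:(lia)). destruct Bool.eqb; lra.
Qed.

Lemma chan_row_xlnx k : forall pw u, (forall t, (t < k)%nat -> 0 <= pw t <= 1) ->
  lsum (all_vecs k) (fun a => chan k pw a u * ln (chan k pw a u)) = - sumR k (fun t => hb (pw t)).
Proof.
  induction k as [|k IH]; intros pw u Hpw.
  - unfold lsum, chan, prodR, sumR; simpl. rewrite ln_1. ring.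
  - rewrite lsum_all_vecs_S, sumR_S. setoid_rewrite chan_S.
    assert (Hpw' : forall t, (t < k)%nat -> 0 <= pw (S t) <= 1) by (intros; apply Hpw; lia).
    assert (Hsplit : forall r, 0 <= r ->
      lsum (all_vecs k) (fun a => r * chan k (fun t => pw (S t)) a (tl u)
                                   * ln (r * chan k (fun t => pw (S t)) a (tl u)))
      = r * ln r - r * sumR k (fun t => hb (pw (S t)))).
    { intros r Hr.
      rewrite (lsum_ext _ _ (fun a => r * ln r * chan k (fun t => pw (S t)) a (tl u)
          + r * (chan k (fun t => pw (S t)) a (tl u) * ln (chan k (fun t => pw (S t)) a (tl u)))))
        by (intros; apply xlnx_mult; [auto | now apply chan_nonneg]).
      rewrite lsum_plus, !lsum_scal, chan_sum1, IH by auto. ring. }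
    specialize (Hpw 0%nat ltac:(lia)).
    rewrite !Hsplit by (destruct Bool.eqb; lra). unfold hb.
    destruct (hd false u); simpl; ring.
Qed.

Section Channel.
Variables (k : nat) (pw : nat -> R).
Hypothesis Hpw : forall t, (t < k)%nat -> / 2 <= pw t <= 1.

Lemma pw_unit t : (t < k)%nat -> 0 <= pw t <= 1.
Proof. intro Ht. specialize (Hpw t Ht). lra. Qed.

Definition pi := prodR k pw.
Definition rho := prodR k (fun t => 1 - pw t).

(* Since pw t >= 1/2, every factor of chan lies between 1 - pw t and pw t. *)
Lemma chan_factor_bounds b1 b2 t : (t < k)%nat ->
  0 <= 1 - pw t <= (if Bool.eqb b1 b2 then pw t else 1 - pw t) /\
  (if Bool.eqb b1 b2 then pw t else 1 - pw t) <= pw t.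
Proof. intro Ht. specialize (Hpw t Ht). destruct Bool.eqb; lra. Qed.

Lemma chan_bounds a u : 0 <= rho <= chan k pw a u /\ chan k pw a u <= pi.
Proof.
  split; [apply lprod_le | apply lprod_le]; intros t Ht; apply in_seq in Ht;
    destruct (chan_factor_bounds (nth t a false) (nth t u false) t ltac:(lia)); lra.
Qed.

Lemma chan_diag u : chan k pw u u = pi.
Proof. apply lprod_ext. intros. now rewrite Bool.eqb_reflx. Qed.

Lemma pi_bounds : 0 < pi <= 1.
Proof.
  split.
  - apply lprod_pos. intros t Ht. apply in_seq in Ht. specialize (Hpw t ltac:(lia)). lra.
  - replace 1 with (prodR k (fun _ => 1)).
    + apply lprod_le. intros t Ht. apply in_seq in Ht. specialize (Hpw t ltac:(lia)). lra.
    + unfold prodR. induction (seq 0 k); simpl; [|rewrite IHl]; ring.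
Qed.

Lemma chan_offdiag_sum u : In u (all_vecs k) ->
  lsum (all_vecs k) (fun a => if veq u a then 0 else chan k pw a u) = 1 - pi.
Proof.
  intro Hu. rewrite <- (chan_sum1 k pw u), <- (chan_diag u).
  rewrite <- (lsum_pick_l veq (all_vecs k) u (fun a => chan k pw a u)) by auto using nodup_all_vecs.
  rewrite <- lsum_minus. apply lsum_ext. intros; destruct veq; ring.
Qed.

Lemma chan_offdiag_le a u : In a (all_vecs k) -> In u (all_vecs k) -> a <> u ->
  chan k pw a u <= 1 - pi.
Proof.
  intros Ha Hu Hau. rewrite <- (chan_offdiag_sum u Hu).
  eapply Rle_trans;
    [|apply (lsum_ge_term _ (fun a => if veq u a then 0 else chan k pw a u) a); auto].
  - destruct veq; [congruence | lra].
  - intros; destruct veq; [lra | now apply chan_nonneg, pw_unit].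
Qed.

Section Output.
Variable q : list bool -> R.
Hypothesis Hq0 : forall u, 0 <= q u.
Hypothesis Hq1 : lsum (all_vecs k) q = 1.

Definition joint (a u : list bool) : R := q u * chan k pw a u.
Definition out (a : list bool) : R := lsum (all_vecs k) (joint a).

Definition Hw : R := sumR k (fun t => hb (pw t)).

Lemma joint_nonneg a u : 0 <= joint a u.
Proof. apply Rmult_le_pos; [auto | apply chan_nonneg, pw_unit]. Qed.

Lemma out_nonneg a : 0 <= out a.
Proof. apply lsum_nonneg. intros; apply joint_nonneg. Qed.

Lemma out_sum1 : lsum (all_vecs k) out = 1.
Proof.
  unfold out, joint. rewrite lsum_swap, <- Hq1. apply lsum_ext. intros u _.
  rewrite lsum_scal, chan_sum1. ring.
Qed.

(* P(a) is an average of chan(a|.), hence lies between rho and pi. *)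
Lemma out_bounds a : rho <= out a <= pi.
Proof.
  unfold out, joint. rewrite <- (Rmult_1_l rho), <- (Rmult_1_l pi), <- Hq1, <- !lsum_scalr.
  split; apply lsum_le; intros u _; apply Rmult_le_compat_l; auto; apply chan_bounds.
Qed.

Lemma joint_xlnx :
  lsum (all_vecs k) (fun a => lsum (all_vecs k) (fun u => joint a u * ln (joint a u)))
  = - (Ent (all_vecs k) q + Hw).
Proof.
  rewrite lsum_swap. unfold Ent, Hw, joint.
  rewrite (lsum_ext _ _ (fun u => q u * ln (q u) + q u * (- sumR k (fun t => hb (pw t))))).
  - rewrite lsum_plus, lsum_scalr, Hq1. ring.
  - intros u _.
    rewrite (lsum_ext _ _ (fun a => q u * ln (q u) * chan k pw a u
                                   + q u * (chan k pw a u * ln (chan k pw a u))))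
      by (intros; apply xlnx_mult; [auto | apply chan_nonneg, pw_unit]).
    rewrite lsum_plus, !lsum_scal, chan_sum1, chan_row_xlnx by apply pw_unit. ring.
Qed.

Lemma Ent_out :
  Ent (all_vecs k) out = Ent (all_vecs k) q + Hw - cond_ent (all_vecs k) (all_vecs k) joint.
Proof.
  rewrite cond_ent_split, joint_xlnx by (intros; apply joint_nonneg). unfold out. ring.
Qed.

Lemma Ent_out_le_joint : Ent (all_vecs k) out <= Ent (all_vecs k) q + Hw.
Proof.
  rewrite Ent_out. assert (0 <= cond_ent (all_vecs k) (all_vecs k) joint)
    by (apply cond_ent_nonneg; intros; apply joint_nonneg). lra.
Qed.

Lemma Ent_out_le_rho : (forall t, (t < k)%nat -> pw t < 1) ->
  Ent (all_vecs k) out <= - sumR k (fun t => ln (1 - pw t)).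
Proof.
  intro Hlt.
  assert (Hpos : forall t, In t (seq 0 k) -> 0 < 1 - pw t)
    by (intros t Ht; apply in_seq in Ht; specialize (Hlt t ltac:(lia)); lra).
  rewrite sumR_lsum, <- ln_lprod by exact Hpos. fold (rho).
  apply Ent_le_of_ge; [apply out_sum1 | now apply lprod_pos | apply out_bounds].
Qed.

Lemma Ent_out_ge_pi : - sumR k (fun t => ln (pw t)) <= Ent (all_vecs k) out.
Proof.
  assert (Hpos : forall t, In t (seq 0 k) -> 0 < pw t)
    by (intros t Ht; apply in_seq in Ht; specialize (Hpw t ltac:(lia)); lra).
  rewrite sumR_lsum, <- ln_lprod by exact Hpos. fold (pi).
  apply Ent_ge_of_le; [apply out_nonneg | apply out_sum1 | apply pi_bounds | apply out_bounds].
Qed.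

(** Fano-type bounds on H(U|A) *)

Lemma offdiag_support a u : In a (all_vecs k) -> In u (all_vecs k) -> u <> a ->
  0 < joint a u -> 0 < q u /\ 0 < 1 - pi.
Proof.
  intros Ha Hu Hua HJ. unfold joint in HJ.
  assert (0 <= chan k pw a u) by (apply chan_nonneg, pw_unit).
  assert (chan k pw a u <= 1 - pi) by (apply chan_offdiag_le; auto).
  specialize (Hq0 u). split.
  - destruct (Req_dec (q u) 0) as [E|E]; [rewrite E in HJ|]; lra.
  - destruct (Req_dec (chan k pw a u) 0) as [E|E]; [rewrite E in HJ|]; lra.
Qed.

Lemma offdiag_mass :
  lsum (all_vecs k) (fun a => lsum (all_vecs k) (fun u => if veq u a then 0 else joint a u))
  = 1 - pi.
Proof.
  rewrite lsum_swap, <- (Rmult_1_l (1 - pi)). rewrite <- Hq1 at 1. rewrite <- lsum_scalr.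
  apply lsum_ext. intros u Hu. rewrite <- (chan_offdiag_sum u Hu), <- lsum_scal.
  apply lsum_ext. intros a _. unfold joint. destruct veq; ring.
Qed.

Lemma cond_ent_le_offdiag (d : list bool -> list bool -> R) :
  (forall a u, 0 <= d a u) ->
  (forall a, In a (all_vecs k) ->
     lsum (all_vecs k) (fun u => if veq u a then pi else d a u) <= 1) ->
  (forall a u, In a (all_vecs k) -> In u (all_vecs k) -> u <> a -> 0 < joint a u -> 0 < d a u) ->
  cond_ent (all_vecs k) (all_vecs k) joint <=
  - (pi * ln pi) + lsum (all_vecs k) (fun a => lsum (all_vecs k)
                     (fun u => if veq u a then 0 else joint a u * - ln (d a u))).
Proof.
  intros Hd0 Hd1 Hdpos. assert (Hpi := pi_bounds).
  set (c := fun a u => if veq u a then pi else d a u).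
  eapply Rle_trans; [apply (cond_ent_gibbs _ _ _ (fun a u _ => joint_nonneg a u) c)|].
  - intros a u _. unfold c. destruct veq; [lra | auto].
  - exact Hd1.
  - intros a u Ha Hu HJ. unfold c. destruct veq as [->|ne]; [lra | auto].
  - assert (Hrow : forall a, In a (all_vecs k) ->
      lsum (all_vecs k) (fun u => joint a u * - ln (c a u))
      = q a * - (pi * ln pi)
        + lsum (all_vecs k) (fun u => if veq u a then 0 else joint a u * - ln (d a u))).
    { intros a Ha.
      replace (q a * - (pi * ln pi)) with (joint a a * - ln pi)
        by (unfold joint; rewrite chan_diag; ring).
      rewrite <- (lsum_pick veq (all_vecs k) a (fun u => joint a u * - ln pi))
        by auto using nodup_all_vecs.
      rewrite <- lsum_plus. apply lsum_ext. intros u _. unfold c. destruct veq; ring. }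
    rewrite (lsum_ext _ _ _ Hrow), lsum_plus, lsum_scalr, Hq1. lra.
Qed.

(* Fano with a uniform guess among the 2^k - 1 wrong answer vectors. *)
Lemma fano_uniform : (1 <= k)%nat ->
  cond_ent (all_vecs k) (all_vecs k) joint <= hb pi + (1 - pi) * ln (2 ^ k - 1).
Proof.
  intro Hk. assert (Hpi := pi_bounds).
  assert (H2k : 2 ^ 1 <= 2 ^ k) by (apply Rle_pow; [lra | lia]).
  assert (HN : 1 <= 2 ^ k - 1) by (simpl in H2k; lra).
  set (d := (1 - pi) / (2 ^ k - 1)).
  assert (Hd : 0 <= d) by (apply Rmult_le_pos; [lra | left; apply Rinv_0_lt_compat; lra]).
  eapply Rle_trans; [apply (cond_ent_le_offdiag (fun _ _ => d))|].
  - intros; exact Hd.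
  - intros a Ha. right.
    rewrite (lsum_ext _ _ (fun u => (if veq u a then pi - d else 0) + d))
      by (intros; destruct veq; ring).
    rewrite lsum_plus, (lsum_pick veq _ a (fun _ => pi - d)) by auto using nodup_all_vecs.
    rewrite lsum_const, length_all_vecs, pow_INR. replace (INR 2) with 2 by (simpl; ring).
    unfold d. field. lra.
  - intros a u Ha Hu Hua HJ. destruct (offdiag_support a u Ha Hu Hua HJ).
    apply Rdiv_lt_0_compat; lra.
  - rewrite (lsum_ext _ _ (fun a => lsum (all_vecs k)
        (fun u => if veq u a then 0 else joint a u) * - ln d)).
    2: { intros a _. rewrite <- lsum_scalr. apply lsum_ext. intros; destruct veq; ring. }
    rewrite lsum_scalr, offdiag_mass. unfold hb, d.
    destruct (Req_dec pi 1) as [E|E].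
    + rewrite E. right. ring.
    + unfold Rdiv. rewrite ln_mult, ln_Rinv by (try apply Rinv_0_lt_compat; lra). right. ring.
Qed.

(* Fano with a guess proportional to the prior q. *)
Lemma fano_input :
  cond_ent (all_vecs k) (all_vecs k) joint <= hb pi + (1 - pi) * Ent (all_vecs k) q.
Proof.
  assert (Hpi := pi_bounds).
  eapply Rle_trans; [apply (cond_ent_le_offdiag (fun _ u => (1 - pi) * q u))|].
  - intros; apply Rmult_le_pos; auto; lra.
  - intros a Ha.
    apply Rle_trans with
      (lsum (all_vecs k) (fun u => (if veq u a then pi else 0) + (1 - pi) * q u)).
    + apply lsum_le. intros u _.
      assert (0 <= (1 - pi) * q u) by (apply Rmult_le_pos; auto; lra). destruct veq; lra.
    + rewrite lsum_plus, (lsum_pick veq _ a (fun _ => pi)), lsum_scal, Hq1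
        by auto using nodup_all_vecs. lra.
  - intros a u Ha Hu Hua HJ. destruct (offdiag_support a u Ha Hu Hua HJ).
    apply Rmult_lt_0_compat; lra.
  - assert (Hpt : forall a u, In a (all_vecs k) -> In u (all_vecs k) ->
      (if veq u a then 0 else joint a u * - ln ((1 - pi) * q u))
      = (if veq u a then 0 else joint a u) * - ln (1 - pi)
        + (if veq u a then 0 else chan k pw a u) * - (q u * ln (q u))).
    { intros a u Ha Hu. destruct veq as [|ne]; [ring|].
      replace (chan k pw a u * - (q u * ln (q u))) with (joint a u * - ln (q u))
        by (unfold joint; ring).
      destruct (Req_dec (joint a u) 0) as [E|E]; [rewrite E; ring|].
      assert (0 <= joint a u) by apply joint_nonneg.
      destruct (offdiag_support a u Ha Hu ne ltac:(lra)).
      rewrite ln_mult by lra. ring. }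
    rewrite (lsum_ext _ _ (fun a =>
        lsum (all_vecs k) (fun u => if veq u a then 0 else joint a u) * - ln (1 - pi)
        + lsum (all_vecs k)
            (fun u => (if veq u a then 0 else chan k pw a u) * - (q u * ln (q u))))).
    2: { intros a Ha. rewrite <- lsum_scalr, <- lsum_plus. apply lsum_ext. intros u Hu.
         now apply Hpt. }
    rewrite lsum_plus, lsum_scalr, offdiag_mass, lsum_swap.
    rewrite (lsum_ext _ _ (fun u => (1 - pi) * - (q u * ln (q u)))).
    2: { intros u Hu. rewrite lsum_scalr, chan_offdiag_sum by auto. reflexivity. }
    rewrite lsum_scal, lsum_opp. unfold Ent, hb. right. ring.
Qed.

Lemma fano : (1 <= k)%nat ->
  cond_ent (all_vecs k) (all_vecs k) joint
  <= hb pi + (1 - pi) * Rmin (ln (2 ^ k - 1)) (Ent (all_vecs k) q).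
Proof.
  intro Hk. unfold Rmin. destruct Rle_dec; [now apply fano_uniform | apply fano_input].
Qed.

Lemma Ent_out_ge_fano : (1 <= k)%nat ->
  Ent (all_vecs k) q + Hw - hb pi - (1 - pi) * Rmin (ln (2 ^ k - 1)) (Ent (all_vecs k) q)
  <= Ent (all_vecs k) out.
Proof. intro Hk. rewrite Ent_out. assert (H := fano Hk). lra. Qed.

End Output.

End Channel.

Lemma indic_nth {C : Type} k (c : nat -> C) mj t :
  (t < k)%nat -> nth t (indic k c mj) false = mj (c t).
Proof.
  intro Ht. unfold indic. rewrite nth_indep with (d' := mj (c 0%nat)).
  - rewrite (map_nth (fun t => mj (c t))), seq_nth; auto.
  - now rewrite length_map, length_seq.
Qed.

Lemma indic_in {C : Type} k (c : nat -> C) mj : In (indic k c mj) (all_vecs k).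
Proof. apply in_all_vecs. unfold indic. now rewrite length_map, length_seq. Qed.

Lemma probU_nonneg {C : Type} n m p k (c : nat -> C) u :
  (forall j, (j < n)%nat -> 0 <= p j) -> 0 <= probU n m p k c u.
Proof.
  intro H. apply lsum_nonneg. intros j Hj. apply in_seq in Hj.
  destruct list_eq_dec; [apply H; lia | lra].
Qed.

Lemma probU_sum {C : Type} n m p k (c : nat -> C) :
  sumR n p = 1 -> lsum (all_vecs k) (probU n m p k c) = 1.
Proof.
  intro H. unfold probU. setoid_rewrite sumR_lsum. rewrite lsum_swap, <- H, sumR_lsum.
  apply lsum_ext. intros j _.
  apply (lsum_pick_l (list_eq_dec Bool.bool_dec) _ _ (fun _ => p j));
    [apply nodup_all_vecs | apply indic_in].
Qed.

Lemma probA_out {C : Type} n m p k (c : nat -> C) pw a :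
  probA n m p k c pw a = out k pw (probU n m p k c) a.
Proof.
  unfold probA, out, joint, probU. rewrite sumR_lsum.
  setoid_rewrite sumR_lsum. setoid_rewrite <- lsum_scalr. rewrite lsum_swap.
  apply lsum_ext. intros j _.
  rewrite (lsum_ext _ _ (fun u => if list_eq_dec Bool.bool_dec (indic k c (m j)) u
                                  then p j * chan k pw a u else 0))
    by (intros; destruct list_eq_dec; ring).
  rewrite (lsum_pick_l (list_eq_dec Bool.bool_dec)) by (apply nodup_all_vecs || apply indic_in).
  f_equal. apply lprod_ext. intros t Ht. apply in_seq in Ht.
  rewrite indic_nth by lia. reflexivity.
Qed.

(** * From nats to bits *)

Lemma ln2_pos : 0 < ln 2.
Proof. rewrite <- ln_1. apply ln_increasing; lra. Qed.

Lemma div_ln2_le x y : x <= y -> x / ln 2 <= y / ln 2.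
Proof.
  intro H. apply Rmult_le_compat_r; [left; apply Rinv_0_lt_compat, ln2_pos | exact H].
Qed.

Lemma Rmin_div x y r : 0 < r -> Rmin (x / r) (y / r) = Rmin x y / r.
Proof.
  intro Hr. assert (Hmono : forall a b, a <= b -> a / r <= b / r)
    by (intros; apply Rmult_le_compat_r; [left; now apply Rinv_0_lt_compat | auto]).
  unfold Rmin at 2. destruct Rle_dec as [H|H].
  - now apply Rmin_left, Hmono.
  - apply Rmin_right, Hmono. lra.
Qed.

Lemma plogp_ln x : plogp x = x * ln x / ln 2.
Proof. unfold plogp, log2. destruct Req_EM_T as [->|_]; unfold Rdiv; ring. Qed.

Lemma sumR_div_ln2 k f : sumR k (fun t => f t / ln 2) = sumR k f / ln 2.
Proof. unfold Rdiv. apply lsum_scalr. Qed.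

Lemma entropy_ln k f : entropy k f = Ent (all_vecs k) f / ln 2.
Proof.
  unfold entropy, Ent. fold (lsum (all_vecs k) (fun v => plogp (f v))).
  setoid_rewrite plogp_ln. unfold Rdiv. rewrite lsum_scalr. ring.
Qed.

Lemma sum_H_W_ln k pw : sumR k (fun t => H_W (pw t)) = Hw k pw / ln 2.
Proof.
  unfold Hw. rewrite <- sumR_div_ln2. apply lsum_ext. intros t _.
  unfold H_W, hb. rewrite !plogp_ln. unfold Rdiv. ring.
Qed.

Lemma sum_log2_ln k f : - sumR k (fun t => log2 (f t)) = - sumR k (fun t => ln (f t)) / ln 2.
Proof. unfold log2. rewrite sumR_div_ln2. unfold Rdiv. ring. Qed.

Lemma H_DA_ln {C : Type} n m p k (c : nat -> C) pw :
  H_DA n m p k c pw = Ent (all_vecs k) (out k pw (probU n m p k c)) / ln 2.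
Proof.
  unfold H_DA. rewrite entropy_ln. f_equal. unfold Ent. f_equal.
  apply lsum_ext. intros a _. now rewrite probA_out.
Qed.

Lemma h_upper_ln {C : Type} n m p k (c : nat -> C) pw :
  let bound := (Ent (all_vecs k) (probU n m p k c) + Hw k pw) / ln 2 in
  h_upper n m p k c pw =
  if some_one k pw then bound
  else Rmin bound (- sumR k (fun t => ln (1 - pw t)) / ln 2).
Proof.
  unfold h_upper, H_DU. rewrite entropy_ln, sum_H_W_ln, sum_log2_ln.
  replace (Ent _ _ / ln 2 + Hw k pw / ln 2)
    with ((Ent (all_vecs k) (probU n m p k c) + Hw k pw) / ln 2) by (unfold Rdiv; ring).
  reflexivity.
Qed.

Lemma h_lower_ln {C : Type} n m p k (c : nat -> C) pw :
  let HU := Ent (all_vecs k) (probU n m p k c) in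
  h_lower n m p k c pw =
  Rmax (- sumR k (fun t => ln (pw t)) / ln 2)
       ((HU + Hw k pw - hb (pi k pw) - (1 - pi k pw) * Rmin (ln (2 ^ k - 1)) HU) / ln 2).
Proof.
  unfold h_lower, H_DU. rewrite entropy_ln, sum_H_W_ln, sum_log2_ln, !plogp_ln.
  unfold log2. rewrite Rmin_div by exact ln2_pos.
  fold (pi k pw). f_equal. unfold hb, Rdiv. ring.
Qed.

Lemma some_one_false k pw : some_one k pw = false ->
  (forall t, (t < k)%nat -> pw t <= 1) -> forall t, (t < k)%nat -> pw t < 1.
Proof.
  intros Hs Hle t Ht. destruct (Req_dec (pw t) 1) as [E|E]; [|specialize (Hle t Ht); lra].
  assert (existsb (fun t => if Req_EM_T (pw t) 1 then true else false) (seq 0 k) = true).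
  { apply existsb_exists. exists t. split; [apply in_seq; lia|]. now destruct Req_EM_T. }
  unfold some_one in Hs. congruence.
Qed.

Theorem theorem4p2 (C : Type) (n : nat) (m : nat -> C -> bool) (p : nat -> R)
  (k : nat) (c : nat -> C) (pw : nat -> R)
  (Hk : (1 <= k)%nat)
  (Hm : forall i j, (i < n)%nat -> (j < n)%nat -> i <> j -> m i <> m j)
  (Hp0 : forall j, (j < n)%nat -> 0 <= p j)
  (Hp1 : sumR n p = 1)
  (Hc : forall s t, (s < k)%nat -> (t < k)%nat -> s <> t -> c s <> c t)
  (Hpw : forall t, (t < k)%nat -> / 2 <= pw t <= 1) :
  h_lower n m p k c pw <= H_DA n m p k c pw <= h_upper n m p k c pw.
Proof.
  rewrite h_lower_ln, H_DA_ln, h_upper_ln. cbv zeta.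
  set (q := probU n m p k c).
  assert (Hq0 : forall u, 0 <= q u) by (intro; now apply probU_nonneg).
  assert (Hq1 : lsum (all_vecs k) q = 1) by now apply probU_sum.
  split.
  - apply Rmax_lub; apply div_ln2_le.
    + now apply Ent_out_ge_pi.
    + now apply Ent_out_ge_fano.
  - assert (Hupper := Ent_out_le_joint k pw Hpw q Hq0 Hq1).
    destruct (some_one k pw) eqn:Hs; [now apply div_ln2_le|].
    apply Rmin_glb; apply div_ln2_le; [exact Hupper|].
    apply Ent_out_le_rho; auto.
    apply some_one_false; [exact Hs|]. intros t Ht. apply Hpw, Ht.
Qed.
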